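(* Let $\boldsymbol X$ be an $n\times d$ data matrix (rows $\boldsymbol x_1,\ldots,\boldsymbol x_n\in\mathbb R^d$), and let $\hat{\boldsymbol\mu}$ be a location estimator, i.e. a map assigning to every $n\times d$ data matrix a vector in $\mathbb R^d$, satisfying the following property: whenever all rows of a data matrix lie in a lower-dimensional affine subspace of $\mathbb R^d$, the estimate $\hat{\boldsymbol\mu}$ of that data matrix lies in that subspace as well. Then the finite-sample cellwise breakdown value satisfies $$\varepsilon^*_n(\hat{\boldsymbol\mu},\boldsymbol X)\leqslant \left\lceil \frac{n}{d}\right\rceil\Big/ n .$$
   Context: For an integer $m\ge 0$, $\boldsymbol X^m$ denotes any corrupted data matrix obtained from $\boldsymbol X$ by replacing at most $m$ cells (entries) in each column of $\boldsymbol X$ by arbitrary real values. The finite-sample cellwise breakdown value of $\hat{\boldsymbol\mu}$ at $\boldsymbol X$ is $$\varepsilon^*_n(\hat{\boldsymbol\mu},\boldsymbol X)=\min\Big\{\tfrac{m}{n}:\ \sup_{\boldsymbol X^m}\|\hat{\boldsymbol\mu}(\boldsymbol X^m)-\hat{\boldsymbol\mu}(\boldsymbol X)\|=\infty\Big\},$$ the supremum being over all such corrupted matrices $\boldsymbol X^m$. *)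

From mathcomp Require Import all_boot all_order all_algebra.
From mathcomp Require Import reals.
Set Implicit Arguments. Unset Strict Implicit. Unset Printing Implicit Defensive.
Import Order.TTheory GRing.Theory Num.Theory.
Local Open Scope ring_scope.

Definition eucl_norm (R : realType) (d : nat) (v : 'rV[R]_d) : R :=
  Num.sqrt (\sum_(j < d) v ord0 j ^+ 2).

(* Affine subspace a + V, V given by the row space of a d x d matrix;
   its dimension is \rank V. *)
Definition in_affine (R : realType) (d : nat) (a : 'rV[R]_d) (V : 'M[R]_d)
  (x : 'rV[R]_d) : Prop := ((x - a) <= V)%MS.

Definition affine_subspace_preserving (R : realType) (n d : nat)
  (mu : 'M[R]_(n, d) -> 'rV[R]_d) : Prop :=
  forall (Y : 'M[R]_(n, d)) (a : 'rV[R]_d) (V : 'M[R]_d),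
    (\rank V < d)%N ->
    (forall i : 'I_n, in_affine a V (row i Y)) ->
    in_affine a V (mu Y).

Definition cell_corrupted (R : realType) (n d m : nat)
  (X Xm : 'M[R]_(n, d)) : Prop :=
  forall j : 'I_d, (#|[set i : 'I_n | Xm i j != X i j]| <= m)%N.

Definition cellwise_breaks_down (R : realType) (n d : nat)
  (mu : 'M[R]_(n, d) -> 'rV[R]_d) (X : 'M[R]_(n, d)) (m : nat) : Prop :=
  forall B : R, exists Xm : 'M[R]_(n, d),
    cell_corrupted m X Xm /\ B < eucl_norm (mu Xm - mu X).

(** Split the n rows into d blocks of at most ceil(n/d) consecutive rows and
    let the j-th block spend its corruption budget on column j: changing one
    cell per row is enough to move every row onto the hyperplane
    x_1 + ... + x_d = t.  Since that hyperplane is a (d-1)-dimensional affine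
    subspace, the estimate of the corrupted data lies on it too, so its
    coordinate sum is t, and letting t grow pushes the estimate arbitrarily
    far from the estimate of the clean data. *)
From mathcomp Require Import all_boot all_order all_algebra.
From mathcomp Require Import reals.
From mathcomp Require Import zify.
Set Implicit Arguments. Unset Strict Implicit. Unset Printing Implicit Defensive.
Import Order.TTheory GRing.Theory Num.Theory.
Local Open Scope ring_scope.

Definition coord_sum (R : nmodType) (d : nat) (v : 'rV[R]_d) : R :=
  \sum_j v ord0 j.

Lemma coord_sumB (R : zmodType) (d : nat) (u v : 'rV[R]_d) :
  coord_sum (u - v) = coord_sum u - coord_sum v.
Proof. by rewrite /coord_sum -sumrB; apply: eq_bigr => j _; rewrite !mxE. Qed.

Lemma coord_sum_const (R : pzSemiRingType) (d : nat) (c : R) :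
  coord_sum (const_mx c : 'rV[R]_d) = c *+ d.
Proof.
by rewrite /coord_sum (eq_bigr (fun=> c)) ?sumr_const ?card_ord // => j _; rewrite mxE.
Qed.

Lemma abs_coord_le_eucl_norm (R : realType) (d : nat) (v : 'rV[R]_d) (j : 'I_d) :
  `|v ord0 j| <= eucl_norm v.
Proof.
rewrite /eucl_norm -sqrtr_sqr; apply: ler_wsqrtr.
by rewrite (bigD1 j) //= lerDl; apply: sumr_ge0 => k _; exact: sqr_ge0.
Qed.

Lemma abs_coord_sum_le_eucl_norm (R : realType) (d : nat) (v : 'rV[R]_d) :
  `|coord_sum v| <= d%:R * eucl_norm v.
Proof.
apply: le_trans (ler_norm_sum _ _ _) _.
have -> : d%:R * eucl_norm v = \sum_(j < d) eucl_norm v.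
  by rewrite sumr_const card_ord mulr_natl.
by apply: ler_sum => j _; exact: abs_coord_le_eucl_norm.
Qed.

Definition sum_zero_space (R : fieldType) (d : nat) : 'M[R]_d :=
  kermx (const_mx 1 : 'M[R]_(d, 1)).

Lemma mxrank_sum_zero_space (R : fieldType) (d : nat) :
  (0 < d)%N -> (\rank (sum_zero_space R d) < d)%N.
Proof.
case: d => // d _; rewrite mxrank_ker ltn_subrL andbT.
rewrite lt0n mxrank_eq0; apply/eqP => /matrixP /(_ ord0 ord0).
by rewrite !mxE => /eqP; rewrite oner_eq0.
Qed.

Lemma in_affine_sum_zero_space (R : realType) (d : nat) (a x : 'rV[R]_d) :
  in_affine a (sum_zero_space R d) x <-> coord_sum x = coord_sum a.
Proof.
have mul_ones (v : 'rV[R]_d) : v *m const_mx 1 = (coord_sum v)%:M.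
  apply/matrixP => i k; rewrite !ord1 !mxE; apply: eq_bigr => j _.
  by rewrite mxE mulr1.
rewrite /in_affine sub_kermx mul_ones coord_sumB -scalemx1 scalemx_eq0 subr_eq0.
by rewrite oner_eq0 orbF; split=> /eqP.
Qed.

Lemma coord_sum_preserved (R : realType) (n d : nat)
    (mu : 'M[R]_(n, d) -> 'rV[R]_d) (Y : 'M[R]_(n, d)) (t : R) :
  (0 < d)%N -> affine_subspace_preserving mu ->
  (forall i, coord_sum (row i Y) = t) -> coord_sum (mu Y) = t.
Proof.
move=> d_gt0 mu_pres Y_sums.
pose a : 'rV[R]_d := const_mx (t / d%:R).
have sum_a : coord_sum a = t.
  by rewrite coord_sum_const -mulr_natr divfK // pnatr_eq0 -lt0n.
rewrite -sum_a; apply/in_affine_sum_zero_space.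
apply: mu_pres (mxrank_sum_zero_space R d_gt0) _ => i.
by apply/in_affine_sum_zero_space; rewrite Y_sums.
Qed.

Section RowSumsSetTo.

Variables (R : comPzRingType) (n d : nat).

Definition row_sums_set_to (X : 'M[R]_(n, d)) (g : 'I_n -> 'I_d) (t : R) :=
  \matrix_(i, j) (X i j + (j == g i)%:R * (t - coord_sum (row i X))).

Lemma coord_sum_row_sums_set_to X g t i :
  coord_sum (row i (row_sums_set_to X g t)) = t.
Proof.
set s := coord_sum (row i X).
have hit_once : \sum_j (j == g i)%:R * (t - s) = t - s.
  rewrite (bigD1 (g i)) //= eqxx mul1r big1 ?addr0 // => j /negbTE ->.
  by rewrite mul0r.
rewrite /coord_sum (eq_bigr (fun j => row i X ord0 j + (j == g i)%:R * (t - s)));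
  last by move=> j _; rewrite !mxE.
by rewrite big_split /= hit_once addrC subrK.
Qed.

Lemma row_sums_set_to_neq X g t i j :
  row_sums_set_to X g t i j != X i j -> g i = j.
Proof.
by rewrite mxE; case: (eqVneq j (g i)) => [-> | _] //; rewrite mul0r addr0 eqxx.
Qed.

End RowSumsSetTo.

Lemma cell_corrupted_row_sums_set_to (R : realType) (n d m : nat)
    (X : 'M[R]_(n, d)) (g : 'I_n -> 'I_d) (t : R) :
  (forall j, #|[set i | g i == j]| <= m)%N ->
  cell_corrupted m X (row_sums_set_to X g t).
Proof.
move=> g_fibres j; apply: leq_trans (g_fibres j).
by apply/subset_leq_card/subsetP => i; rewrite !inE => /row_sums_set_to_neq ->.
Qed.

Lemma breaks_down_of_small_fibres (R : realType) (n d m : nat)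
    (mu : 'M[R]_(n, d) -> 'rV[R]_d) (X : 'M[R]_(n, d)) (g : 'I_n -> 'I_d) :
  (0 < d)%N -> affine_subspace_preserving mu ->
  (forall j, #|[set i | g i == j]| <= m)%N ->
  cellwise_breaks_down mu X m.
Proof.
move=> d_gt0 mu_pres g_fibres B.
pose t := coord_sum (mu X) + d%:R * (`|B| + 1).
exists (row_sums_set_to X g t); split; first exact: cell_corrupted_row_sums_set_to.
have := abs_coord_sum_le_eucl_norm (mu (row_sums_set_to X g t) - mu X).
rewrite coord_sumB (coord_sum_preserved d_gt0 mu_pres (coord_sum_row_sums_set_to X g t)).
rewrite /t addrC addKr ger0_norm ?mulr_ge0 ?addr_ge0 //.
rewrite ler_pM2l ?ltr0n // => /(lt_le_trans _); apply.
by apply: le_lt_trans (ler_norm B) _; rewrite ltrDl.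
Qed.

Lemma card_divn_fibre (n m j : nat) :
  (0 < m)%N -> (#|[set i : 'I_n | i %/ m == j]| <= m)%N.
Proof.
move=> m_gt0; pose rem (i : 'I_n) : 'I_m := Ordinal (ltn_pmod i m_gt0).
rewrite -(card_in_imset (f := rem)); first by rewrite -[X in (_ <= X)%N]card_ord max_card.
move=> i k; rewrite !inE => /eqP div_i /eqP div_k [] mod_ik.
by apply/val_inj; rewrite /= (divn_eq i m) (divn_eq k m) div_i div_k mod_ik.
Qed.

Lemma exists_small_fibres (n d m : nat) :
  (0 < m)%N -> (n <= m * d)%N ->
  exists g : 'I_n -> 'I_d, forall j, (#|[set i | g i == j]| <= m)%N.
Proof.
move=> m_gt0 n_le.
have block_lt (i : 'I_n) : (i %/ m < d)%N.
  by rewrite ltn_divLR // mulnC; exact: leq_trans (ltn_ord i) n_le.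
exists (fun i => Ordinal (block_lt i)) => j.
by apply: leq_trans (card_divn_fibre n j m_gt0); apply/subset_leq_card/subsetP => i.
Qed.

Lemma leq_ceil_divn_mul (n d : nat) : (0 < d)%N -> (n <= (n + d.-1) %/ d * d)%N.
Proof.
move=> d_gt0; have := divn_eq (n + d.-1) d; have := ltn_pmod (n + d.-1) d_gt0; lia.
Qed.

Theorem proposition1 (R : realType) (n d : nat) (hn : (0 < n)%N) (hd : (0 < d)%N)
  (mu : 'M[R]_(n, d) -> 'rV[R]_d) (X : 'M[R]_(n, d)) :
  affine_subspace_preserving mu ->
  exists m : nat, (m <= (n + d.-1) %/ d)%N /\ cellwise_breaks_down mu X m.
Proof.
move=> mu_pres; set m := ((n + d.-1) %/ d)%N.
have m_gt0 : (0 < m)%N by rewrite divn_gt0 //; lia.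
have [g g_fibres] := exists_small_fibres m_gt0 (leq_ceil_divn_mul n hd).
by exists m; split=> //; exact: breaks_down_of_small_fibres hd mu_pres g_fibres.
Qed.
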